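(* Let $n\ge 1$ be an integer and let $U_{6n}=\langle a,b : a^{2n}=b^3=1,\ a^{-1}ba=b^{-1}\rangle$ (a group of order $6n$). Let $\Gamma_{U_{6n}}$ be its non-commuting graph. Then the spectrum of the distance Laplacian matrix $D^L(\Gamma_{U_{6n}})$ (eigenvalues counted with multiplicity, multiplicities being added if two of the listed values coincide) consists of: (a) $0$ with multiplicity $1$; (b) $5n$ with multiplicity $3$; (c) $6n$ with multiplicity $3(n-1)$; (d) $7n$ with multiplicity $2n-1$.
   Context: For a finite non-abelian group $G$ with centre $Z(G)$, the non-commuting graph $\Gamma_G$ is the simple undirected graph with vertex set $G\setminus Z(G)$, in which two distinct vertices $u,v$ are adjacent if and only if $uv\ne vu$. For a connected graph $H$, $d_{uv}$ denotes the length of a shortest path between $u$ and $v$; the distance matrix $D(H)$ has $(u,v)$-entry $d_{uv}$. The transmission of a vertex $v$ is $\sum_{u} d_{uv}$, and $Tr(H)$ is the diagonal matrix of vertex transmissions. The distance Laplacian matrix is $D^L(H)=Tr(H)-D(H)$. *)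

From HB Require Import structures.
From mathcomp Require Import all_boot all_order all_algebra all_fingroup all_solvable all_field.
Set Implicit Arguments. Unset Strict Implicit. Unset Printing Implicit Defensive.
Import GRing.Theory Num.Theory.

Section NonCommutingGraph.
Variable gT : finGroupType.
Variable G : {group gT}.

Local Open Scope group_scope.

Definition nc_vertices : {set gT} := G :\: 'Z(G).

(* Adjacency: distinct vertices u, v with u v <> v u (non-commuting implies distinct). *)
Definition nc_adj (u v : gT) : bool :=
  [&& u \in nc_vertices, v \in nc_vertices & u * v != v * u].

Fixpoint nc_ball (k : nat) (u : gT) : {set gT} :=
  if k is k'.+1 then
    nc_ball k' u :|: [set y | [exists x in nc_ball k' u, nc_adj x y]]
  else [set u].

(* Graph distance d_uv = least k such that v is reachable from u within k
   steps (any walk of length <= k shortens to a path); unreachable pairs would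
   get #|gT|, but the graph is connected so this case does not arise. *)
Definition nc_dist (u v : gT) : nat :=
  find (fun k => v \in nc_ball k u) (iota 0 #|gT|).

Definition nc_vert (i : 'I_#|nc_vertices|) : gT := enum_val i.

Definition nc_distmx : 'M[algC]_#|nc_vertices| :=
  \matrix_(i, j) (nc_dist (nc_vert i) (nc_vert j))%:R%R.

Definition nc_transmx : 'M[algC]_#|nc_vertices| :=
  diag_mx (\row_j (\sum_i nc_distmx i j)%R).

Definition nc_distlap : 'M[algC]_#|nc_vertices| := (nc_transmx - nc_distmx)%R.

End NonCommutingGraph.

From HB Require Import structures.
From mathcomp Require Import all_boot all_order all_algebra all_fingroup all_solvable all_field.
From mathcomp Require Import ring.
Import GRing.Theory Num.Theory.
Set Implicit Arguments. Unset Strict Implicit. Unset Printing Implicit Defensive.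

(* Commuting is an equivalence relation on the non-central elements of U_{6n}: its classes are
   the 2n non-central elements a^(2i) b^(+-1) of <a^2, b> and, for each j < 3, the n elements
   a^(2i+1) b^j.  Hence the non-commuting graph is the complete multipartite graph K_{2n,n,n,n}
   on N = 5n vertices, with distance 1 across parts and 2 inside a part.  For a complete
   multipartite graph with part sizes n_q, x - D^L = C + E (1 + J) E^T, where
   C = diag(x - N - n_(part of i)), E is the vertex/part incidence matrix and J the all-ones
   matrix; two applications of det(A + U W) = det A * det(1 + W A^-1 U) give
   det(x - D^L) = x (x - N)^(k-1) prod_q (x - N - n_q)^(n_q - 1). *)

Local Open Scope ring_scope.

Section DeterminantUpdate.
Variable R : comNzRingType.

Lemma det_sylvester m l (U : 'M[R]_(m, l)) (W : 'M[R]_(l, m)) :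
  \det (1%:M + U *m W) = \det (1%:M + W *m U).
Proof.
have E1 : block_mx 1%:M 0 W 1%:M *m block_mx 1%:M (- U) 0 (1%:M + W *m U)
          = block_mx 1%:M (- U) W 1%:M.
  rewrite mulmx_block !mul1mx !mul0mx !mulmx1 ?mulmx0 ?addr0 ?add0r.
  by rewrite mulmxN addrCA addNr addr0.
have E2 : block_mx 1%:M U 0 1%:M *m block_mx 1%:M (- U) W 1%:M
          = block_mx (1%:M + U *m W) 0 W 1%:M.
  by rewrite mulmx_block !mul1mx !mul0mx !mulmx1 !add0r addNr.
have := congr1 determinant E1; have := congr1 determinant E2.
rewrite !det_mulmx !det_ublock !det_lblock !det1 !mul1r !mulr1.
by move=> -> ->.
Qed.

Lemma det_addmx_mul m l (A Ai : 'M[R]_m) (U : 'M_(m, l)) (W : 'M_(l, m)) :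
  A *m Ai = 1%:M -> \det (A + U *m W) = \det A * \det (1%:M + W *m Ai *m U).
Proof.
move=> AAi; have -> : A + U *m W = A *m (1%:M + Ai *m U *m W).
  by rewrite mulmxDr mulmx1 !mulmxA AAi mul1mx.
by rewrite det_mulmx (det_sylvester (Ai *m U)) mulmxA.
Qed.

End DeterminantUpdate.

Lemma diag_mx_mulV (F : fieldType) m (d : 'I_m -> F) :
  (forall i, d i != 0) -> diag_mx (\row_i d i) *m diag_mx (\row_i (d i)^-1) = 1%:M.
Proof.
move=> d_neq0; apply/matrixP => i j; rewrite mul_diag_mx !mxE.
by case: eqP => [->|_]; rewrite ?mulr1n ?mulr0n ?mulr0 ?divff.
Qed.

Lemma sumr_indicator (R : nzRingType) (I : finType) (P : pred I) :
  \sum_i (P i)%:R = #|P|%:R :> R.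
Proof.
rewrite -sumr_const [RHS]big_mkcond; apply: eq_bigr => i _.
by rewrite unfold_in; case: (P i).
Qed.

Lemma sumr_eq_natr_mul (R : nzRingType) (I : finType) (a : I) (g : I -> R) :
  \sum_q (a == q)%:R * g q = g a.
Proof.
rewrite (bigD1 a) //= eqxx mul1r big1 ?addr0 // => q /negPf.
by rewrite eq_sym => ->; rewrite mul0r.
Qed.

Definition dist_laplacian (R : nzRingType) m (D : 'M[R]_m) : 'M[R]_m :=
  diag_mx (\row_j \sum_i D i j) - D.

Lemma map_dist_laplacian (R S : nzRingType) (f : {rmorphism R -> S}) m (D : 'M[R]_m) :
  map_mx f (dist_laplacian D) = dist_laplacian (map_mx f D).
Proof.
rewrite /dist_laplacian map_mxB map_diag_mx; congr (diag_mx _ - _).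
by apply/rowP => j; rewrite !mxE rmorph_sum; apply: eq_bigr => i _; rewrite mxE.
Qed.

Section MultipartiteDistanceLaplacian.
Variables (N k : nat) (p : 'I_N -> 'I_k).

Definition class_card (q : 'I_k) : nat := #|[pred i | p i == q]|.

Definition multipartite_distmx (R : nzRingType) : 'M[R]_N :=
  \matrix_(i, j) (if i == j then 0 else if p i == p j then 2 else 1)%N%:R.

Lemma map_multipartite_distmx (R S : nzRingType) (f : {rmorphism R -> S}) :
  map_mx f (multipartite_distmx R) = multipartite_distmx S.
Proof. by apply/matrixP => i j; rewrite !mxE rmorph_nat. Qed.

Lemma sum_class_card : (\sum_q class_card q)%N = N.
Proof.
rewrite -[RHS]card_ord -sum1_card (partition_big p xpredT) //=.
by apply: eq_bigr => q _; rewrite sum1_card.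
Qed.

Lemma prod_over_classes (R : comNzRingType) (g : 'I_k -> R) :
  \prod_i g (p i) = \prod_q g q ^+ class_card q.
Proof.
rewrite (partition_big p xpredT) //=; apply: eq_bigr => q _.
by rewrite (eq_bigr (fun _ => g q)) ?prodr_const // => i /eqP ->.
Qed.

Section Shifted.
Variables (F : fieldType) (x : F).

Definition incidence_mx : 'M[F]_(N, k) := \matrix_(i, q) (p i == q)%:R.

Local Notation L := (dist_laplacian (multipartite_distmx F)).
Local Notation E := incidence_mx.
Local Notation shift q := (x - (N + class_card q)%:R).

Lemma transmission_multipartite j :
  \sum_i multipartite_distmx F i j = (N + class_card (p j))%:R - 2.
Proof.
have -> : \sum_i multipartite_distmx F i j
          = \sum_i (1 + (p i == p j)%:R - 2 * (i == j)%:R).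
  apply: eq_bigr => i _; rewrite mxE.
  case: eqP => [->|ij]; first by rewrite eqxx mulr1 /=; ring.
  by rewrite /= mulr0 subr0; case: (p i == p j) => /=; ring.
rewrite !big_split /= sumr_const card_ord sumrN -mulr_sumr.
by rewrite !sumr_indicator card1 mulr1 natrD.
Qed.

Lemma incidence_mul_tr : E *m E^T = \matrix_(i, j) (p i == p j)%:R.
Proof.
apply/matrixP => i j.
rewrite !mxE (eq_bigr (fun q => (p i == q)%:R * (p j == q)%:R)) => [|q _].
  by rewrite sumr_eq_natr_mul eq_sym.
by rewrite !mxE.
Qed.

Lemma incidence_mul_const l : E *m (const_mx 1 : 'M_(k, l)) = const_mx 1.
Proof.
apply/matrixP => i j; rewrite !mxE (eq_bigr (fun q => (p i == q)%:R * 1)) => [|q _].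
  by rewrite sumr_eq_natr_mul.
by rewrite !mxE.
Qed.

Lemma shift_sub_multipartite_distlap :
  x%:M - L = diag_mx (\row_i shift (p i)) + E *m ((1%:M + const_mx 1) *m E^T).
Proof.
have JEt : (const_mx 1 : 'M_k) *m E^T = const_mx 1.
  by rewrite -[const_mx 1]trmx_const -trmx_mul incidence_mul_const trmx_const.
rewrite mulmxDl mul1mx JEt mulmxDr incidence_mul_const incidence_mul_tr.
apply/matrixP => i j; rewrite !mxE transmission_multipartite.
case: (eqVneq i j) => [<-|ij]; first by rewrite !mulr1n eqxx /=; ring.
by rewrite !mulr0n /=; case: (p i == p j) => /=; ring.
Qed.

Lemma trmx_incidence_mul_diag (c : 'I_k -> F) :
  E^T *m diag_mx (\row_i c (p i)) *m E = diag_mx (\row_q ((class_card q)%:R * c q)).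
Proof.
rewrite mul_mx_diag; apply/matrixP => q r; rewrite !mxE.
rewrite (eq_bigr (fun i => (p i == q)%:R * (c q * (q == r)%:R))) => [|i _].
  by rewrite -mulr_suml sumr_indicator; case: (q == r); rewrite ?mulr1 ?mulr0.
by rewrite !mxE; case: (eqVneq (p i) q) => [->|]; rewrite ?mul0r ?mul1r.
Qed.

Lemma det_class_update :
  (forall q, shift q != 0) -> x != N%:R ->
  \det (1%:M + (1%:M + const_mx 1) *m diag_mx (\row_q ((class_card q)%:R / shift q)))
  = \prod_q ((x - N%:R) / shift q) * (x / (x - N%:R)).
Proof.
move=> shift_neq0; rewrite -subr_eq0; set y := x - N%:R => y_neq0.
have y_shift q : y / shift q = 1 + (class_card q)%:R / shift q.
  by rewrite -{2}(divff (shift_neq0 q)) -mulrDl /y natrD opprD addrA subrK.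
have -> : 1%:M + (1%:M + const_mx 1) *m diag_mx (\row_q ((class_card q)%:R / shift q))
          = diag_mx (\row_q (y / shift q))
            + (const_mx 1 : 'cV_k) *m \row_q ((class_card q)%:R / shift q).
  rewrite mulmxDl mul1mx mul_mx_diag; apply/matrixP => q r.
  rewrite !mxE big_ord1 !mxE !mul1r y_shift.
  by case: (eqVneq q r) => [<-|]; rewrite ?mulr1n ?mulr0n ?addr0 ?add0r ?addrA.
have y_shift_neq0 q : y / shift q != 0 by rewrite mulf_neq0 ?invr_eq0.
rewrite (det_addmx_mul _ _ (diag_mx_mulV y_shift_neq0)) det_diag det_mx11.
congr (_ * _); first by apply: eq_bigr => q _; rewrite mxE.
rewrite mul_mx_diag !mxE (eq_bigr (fun q => (class_card q)%:R / y)) => [|q _].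
  rewrite -mulr_suml -natr_sum sum_class_card mulr1n.
  by rewrite -{1}(divff y_neq0) -mulrDl /y subrK.
by rewrite !mxE mulr1 invf_div mulrA divfK.
Qed.

Lemma det_shift_multipartite_distlap :
  (0 < k)%N -> (forall q, 0 < class_card q)%N ->
  (forall q, shift q != 0) -> x != N%:R ->
  \det (x%:M - L) = x * (x - N%:R) ^+ k.-1 * \prod_q shift q ^+ (class_card q).-1.
Proof.
move=> k_gt0 class_gt0 shift_neq0 xN; have y_neq0 : x - N%:R != 0 by rewrite subr_eq0.
rewrite shift_sub_multipartite_distlap.
rewrite (det_addmx_mul _ _ (diag_mx_mulV (fun i => shift_neq0 (p i)))).
rewrite det_diag -!mulmxA (mulmxA E^T) (trmx_incidence_mul_diag (fun q => (shift q)^-1)).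
rewrite det_class_update // (eq_bigr (fun i => shift (p i))) => [|i _]; last by rewrite mxE.
rewrite (prod_over_classes (fun q => shift q)).
rewrite (eq_bigr (fun q => shift q ^+ (class_card q).-1 * shift q)) => [|q _]; last first.
  by rewrite -exprSr prednK.
rewrite big_split /= -!mulrA (mulrA (\prod_q shift q)) -big_split /=.
have -> : \prod_q (shift q * ((x - N%:R) / shift q)) = (x - N%:R) ^+ k.
  rewrite (eq_bigr (fun _ => x - N%:R)) => [|q _]; last by rewrite mulrC divfK.
  by rewrite prodr_const card_ord.
have -> : (x - N%:R) ^+ k = (x - N%:R) * (x - N%:R) ^+ k.-1.
  by rewrite -exprS prednK.
by field.
Qed.

End Shifted.

Lemma char_poly_multipartite_distlap (R : idomainType) :
  (0 < k)%N -> (forall q, 0 < class_card q)%N ->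
  char_poly (dist_laplacian (multipartite_distmx R))
  = 'X * ('X - N%:R%:P) ^+ k.-1
      * \prod_q ('X - (N + class_card q)%:R%:P) ^+ (class_card q).-1.
Proof.
move=> k_gt0 class_gt0; apply/eqP; rewrite -tofrac_eq; apply/eqP.
set x : {fraction {poly R}} := tofrac 'X.
have tofrac_XsubC m : tofrac ('X - m%:R%:P) = x - m%:R.
  by rewrite rmorphB polyC_natr !rmorph_nat.
have XsubC_neq0 m : x - m%:R != 0 by rewrite -tofrac_XsubC tofrac_eq0 polyXsubC_eq0.
rewrite /char_poly /char_poly_mx -det_map_mx map_mxB map_scalar_mx /=.
rewrite !(map_dist_laplacian, map_multipartite_distmx).
rewrite det_shift_multipartite_distlap; [|by []|by []|by []|by rewrite -subr_eq0].
rewrite tofracM tofracM tofracXn tofrac_XsubC rmorph_prod /=; congr (_ * _).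
by apply: eq_bigr => q _; rewrite tofracXn tofrac_XsubC.
Qed.

End MultipartiteDistanceLaplacian.

Lemma find_iota0 (P : pred nat) m k :
  (k < m)%N -> P k -> (forall i, i < k -> ~~ P i)%N -> find P (iota 0 m) = k.
Proof.
move=> km Pk before_k; rewrite -(subnKC km) addSnnS iotaD find_cat size_iota /=.
have -> : has P (iota 0 k) = false.
  by apply/hasPn => i; rewrite mem_iota add0n => /andP [_ /before_k].
by rewrite add0n Pk addn0.
Qed.

Lemma card_enum_val_pred (T : finType) (A : {set T}) (P : pred T) :
  #|[pred i : 'I_#|A| | P (enum_val i)]| = #|[set x in A | P x]|.
Proof.
rewrite -sum1dep_card (big_enum_val_cond P (fun _ => 1%N)) sum1dep_card.
by apply: eq_card => i; rewrite !inE.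
Qed.

Section NonCommutingGraphDistance.
Local Open Scope group_scope.
Variables (gT : finGroupType) (G : {group gT}).
Local Notation V := (nc_vertices G).

Lemma mem_nc_ball0 u v : (v \in nc_ball G 0 u) = (v == u).
Proof. by rewrite inE. Qed.

Lemma mem_nc_ball1 u v : (v \in nc_ball G 1 u) = (v == u) || nc_adj G u v.
Proof.
rewrite /= !inE; congr (_ || _); apply/existsP/idP => [[w]|adj_uv].
  by rewrite !inE => /andP [/eqP ->].
by exists u; rewrite !inE eqxx.
Qed.

Lemma mem_nc_ballS k u v :
  (v \in nc_ball G k.+1 u)
  = (v \in nc_ball G k u) || [exists w in nc_ball G k u, nc_adj G w v].
Proof. by rewrite /= !inE. Qed.

Lemma nc_vertex_noncommuting u : u \in V -> exists2 w, w \in V & u * w != w * u.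
Proof.
rewrite in_setD => /andP [uZ uG].
have : [exists w in G, u * w != w * u].
  rewrite -negb_forall_in; apply: contra uZ => /forall_inP u_cent.
  by apply/centerP; split=> // w /u_cent /eqP.
case/exists_inP => w wG uw; exists w => //; rewrite in_setD wG andbT.
by apply: contra uw => /centerP [_ w_cent]; rewrite (w_cent u uG).
Qed.

Variables (T : eqType) (cls : gT -> T).
Hypothesis commute_cls : {in V &, forall u v, (u * v == v * u) = (cls u == cls v)}.

Lemma nc_dist_classes u v : u \in V -> v \in V ->
  nc_dist G u v = (if u == v then 0 else if cls u == cls v then 2 else 1)%N.
Proof.
move=> uV vV; have adj_cls w : w \in V -> nc_adj G u w = (cls u != cls w).
  by move=> wV; rewrite /nc_adj uV wV commute_cls.
have card_gT (s : seq gT) : uniq s -> (size s <= #|gT|)%N.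
  by move=> s_uniq; rewrite -(card_uniqP s_uniq) max_card.
rewrite /nc_dist; case: eqVneq => [<-|uv].
  by apply: find_iota0; rewrite ?mem_nc_ball0 // (card_gT [:: u]).
have ball1_v : (v \in nc_ball G 1 u) = (cls u != cls v).
  by rewrite mem_nc_ball1 eq_sym (negPf uv) adj_cls.
case: eqVneq => [cls_uv|cls_uv]; last first.
  apply: find_iota0 => [||[|i] //].
  - by apply: (card_gT [:: u; v]); rewrite /= inE andbT.
  - by rewrite ball1_v cls_uv.
  - by rewrite mem_nc_ball0 eq_sym.
have [w wV uw] := nc_vertex_noncommuting uV.
rewrite commute_cls // in uw.
apply: find_iota0 => [||[|[|i]] //].
- have w_neq q : cls q = cls u -> w != q.
    by move=> cls_q; apply: contraNneq uw => ->; rewrite cls_q.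
  apply: (card_gT [:: u; v; w]).
  by rewrite /= !inE !negb_or uv ![_ == w]eq_sym !w_neq.
- rewrite mem_nc_ballS ball1_v cls_uv eqxx /=; apply/exists_inP; exists w.
    by rewrite mem_nc_ball1 adj_cls ?uw ?orbT.
  by rewrite /nc_adj wV vV commute_cls // -cls_uv eq_sym.
- by rewrite mem_nc_ball0 eq_sym.
- by rewrite ball1_v cls_uv eqxx.
Qed.

End NonCommutingGraphDistance.

Lemma expn2_mod3 i : 2 ^ i = (odd i).+1 %[mod 3].
Proof. by elim: i => // i IH; rewrite expnS -modnMmr IH modnMmr /=; case: (odd i). Qed.

Lemma card_ord_odd m (o : bool) : #|[set i : 'I_(2 * m) | odd i == o]| = m.
Proof.
rewrite -sum1dep_card big_mkcond /= -(big_mkord xpredT (fun i => (odd i == o : nat))).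
elim: m => [|m IH]; first by rewrite big_geq.
by rewrite mulnS add2n !big_nat_recr //= IH oddM /=; case: (o); rewrite /= ?addn0 ?addn1.
Qed.

Section U6n.
Local Open Scope group_scope.
Variables (gT : finGroupType) (G : {group gT}) (a b : gT) (n : nat).
Hypotheses (defG : G :=: <<[set a; b]>>) (a_order : a ^+ (2 * n) = 1)
  (b_order : b ^+ 3 = 1) (conj_b_a : b ^ a = b^-1) (card_G : #|G| = (6 * n)%N).

Lemma U6n_n_gt0 : (0 < n)%N.
Proof. by have := cardG_gt0 G; rewrite card_G muln_gt0. Qed.

Lemma conjg_bX_aX m i : (b ^+ m) ^ (a ^+ i) = b ^+ (m * 2 ^ i).
Proof.
have b_inv : b^-1 = b ^+ 2 by apply/eqP; rewrite eq_invg_mul -expgS b_order.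
elim: i => [|i IH]; first by rewrite conjg1 muln1.
by rewrite expgSr conjgM IH conjXg conj_b_a b_inv -expgM expnS mulnCA mulnA.
Qed.

Lemma mulg_bX_aX m i : b ^+ m * a ^+ i = a ^+ i * b ^+ (m * 2 ^ i).
Proof. by rewrite conjgC conjg_bX_aX. Qed.

Lemma mulg_ab i j i' j' :
  (a ^+ i * b ^+ j) * (a ^+ i' * b ^+ j') = a ^+ (i + i') * b ^+ (j * 2 ^ i' + j').
Proof.
by rewrite mulgA -(mulgA (a ^+ i)) mulg_bX_aX !mulgA -expgD -mulgA -expgD.
Qed.

Definition ab (x : 'I_(2 * n) * 'I_3) : gT := a ^+ x.1 * b ^+ x.2.

Lemma ab_exists i j : exists x, a ^+ i * b ^+ j = ab x.
Proof.
have n2_gt0 : (0 < 2 * n)%N by rewrite muln_gt0 U6n_n_gt0.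
exists (Ordinal (ltn_pmod i n2_gt0), Ordinal (ltn_pmod j (isT : (0 < 3)%N))).
by rewrite /ab /= !expg_mod.
Qed.

Lemma im_ab : ab @: setT = G.
Proof.
have ab_group : group_set (ab @: setT).
  apply/group_setP; split.
    by have [x] := ab_exists 0 0; rewrite !expg0 mulg1 => ->; rewrite imset_f.
  move=> _ _ /imsetP [x _ ->] /imsetP [y _ ->].
  rewrite /ab mulg_ab.
  by have [z ->] := ab_exists (x.1 + y.1) (x.2 * 2 ^ y.1 + y.2); rewrite imset_f.
apply/eqP; rewrite eqEsubset; apply/andP; split.
  apply/subsetP => _ /imsetP [x _ ->].
  by rewrite groupM ?groupX // defG mem_gen // !inE eqxx ?orbT.
rewrite defG (gen_subG _ (Group ab_group)); apply/subsetP => g; rewrite !inE.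
case/orP => /eqP ->.
  by have [x] := ab_exists 1 0; rewrite expg0 mulg1 expg1 => ->; rewrite imset_f.
by have [x] := ab_exists 0 1; rewrite expg0 mul1g expg1 => ->; rewrite imset_f.
Qed.

Lemma ab_mem x : ab x \in G.
Proof. by rewrite -im_ab imset_f. Qed.

Lemma ab_inj : injective ab.
Proof.
have card_im : #|ab @: setT| == #|[set: 'I_(2 * n) * 'I_3]|.
  by rewrite im_ab card_G cardsT card_prod !card_ord mulnAC.
by move/imset_injP: card_im => inj_ab x y; apply: inj_ab; rewrite inE.
Qed.

Lemma expgb_eq m m' : (b ^+ m == b ^+ m') = (m == m' %[mod 3]).
Proof.
rewrite -(expg_mod m b_order) -(expg_mod m' b_order).
apply/eqP/eqP => [bm|-> //].
have n2_gt0 : (0 < 2 * n)%N by rewrite muln_gt0 U6n_n_gt0.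
have := @ab_inj (Ordinal n2_gt0, Ordinal (ltn_pmod m (isT : (0 < 3)%N)))
                (Ordinal n2_gt0, Ordinal (ltn_pmod m' (isT : (0 < 3)%N))).
by rewrite /ab /= bm => /(_ erefl) [].
Qed.

Lemma ab_commute x y :
  (ab x * ab y == ab y * ab x)
  = (x.2 * (odd y.1).+1 + y.2 == y.2 * (odd x.1).+1 + x.2 %[mod 3]).
Proof.
have mod_expn2 j i k : j * 2 ^ i + k = j * (odd i).+1 + k %[mod 3].
  by rewrite -modnDml -modnMmr expn2_mod3 modnMmr modnDml.
by rewrite /ab !mulg_ab addnC (inj_eq (mulgI _)) expgb_eq !mod_expn2.
Qed.

Definition ab_central (x : 'I_(2 * n) * 'I_3) : bool := ~~ odd x.1 && (x.2 == 0 :> nat).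

Definition ab_class (x : 'I_(2 * n) * 'I_3) : 'I_4 := inord (if odd x.1 then x.2.+1 else 0).

Lemma ab_center x : (ab x \in 'Z(G)) = ab_central x.
Proof.
have n2 : (1 < 2 * n)%N by rewrite mul2n -addnn; exact: leq_add U6n_n_gt0 U6n_n_gt0.
apply/centerP/idP => [[_ cent_x] | central_x].
  (* ab (1, 0) = a and ab (0, 1) = b *)
  have := cent_x _ (ab_mem (Ordinal n2, ord0)).
  have := cent_x _ (ab_mem (Ordinal (ltnW n2), Ordinal (isT : (1 < 3)%N))).
  move=> /eqP + /eqP; rewrite !ab_commute /ab_central /=; clear cent_x.
  by case: x => [i [j lt_j3]] /=; case: (odd i); case: j lt_j3 => [|[|[|]]].
split=> [|g]; first exact: ab_mem.
rewrite -im_ab => /imsetP [y _ ->]; apply/eqP; rewrite ab_commute.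
by case/andP: central_x => /negPf -> /eqP ->; rewrite mul0n add0n muln1 addn0.
Qed.

Lemma val_ab_class x : ab_class x = (if odd x.1 then x.2.+1 else 0) :> nat.
Proof. by rewrite inordK //; case: (odd x.1); rewrite // ltnS ltn_ord. Qed.

Lemma ab_commute_class x y : ~~ ab_central x -> ~~ ab_central y ->
  (ab x * ab y == ab y * ab x) = (ab_class x == ab_class y).
Proof.
rewrite ab_commute -val_eqE /= !val_ab_class /ab_central.
case: x y => [i [j lt_j3]] [i' [j' lt_j'3]] /=; case: (odd i); case: (odd i') => /=;
  by case: j lt_j3 => [|[|[|]]] //; case: j' lt_j'3 => [|[|[|]]].
Qed.

(* [ord0] is a junk value, taken only outside [G]. *)
Definition commuting_class (g : gT) : 'I_4 :=
  if [pick x | ab x == g] is Some x then ab_class x else ord0.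

Lemma commuting_class_ab x : commuting_class (ab x) = ab_class x.
Proof.
rewrite /commuting_class; case: pickP => [y /eqP /ab_inj -> //|no_pick].
by have := no_pick x; rewrite eqxx.
Qed.

Lemma nc_vertices_ab : nc_vertices G = ab @: [set x | ~~ ab_central x].
Proof.
apply/setP => g; rewrite in_setD; apply/andP/imsetP => [[gZ]|[x]].
  by rewrite -im_ab => /imsetP [x _ gx]; exists x; rewrite // inE -ab_center -gx.
by rewrite inE -ab_center => xZ ->; split; last exact: ab_mem.
Qed.

Lemma commute_commuting_class : {in nc_vertices G &, forall u v,
  (u * v == v * u) = (commuting_class u == commuting_class v)}.
Proof.
move=> u v; rewrite nc_vertices_ab => /imsetP [x + ->] /imsetP [y + ->].
by rewrite !inE !commuting_class_ab; exact: ab_commute_class.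
Qed.

Lemma card_commuting_class q :
  #|[set g in nc_vertices G | commuting_class g == q]|
  = (if q == ord0 then 2 * n else n)%N.
Proof.
have -> : [set g in nc_vertices G | commuting_class g == q]
          = ab @: [set x | ~~ ab_central x && (ab_class x == q)].
  apply/setP => g; rewrite inE nc_vertices_ab; apply/andP/imsetP => [[]|[x]].
    case/imsetP => x x_nc ->; rewrite commuting_class_ab inE in x_nc * => xq.
    by exists x; rewrite // inE x_nc xq.
  rewrite inE => /andP [x_nc xq] ->.
  by rewrite commuting_class_ab xq; split=> //; rewrite imset_f ?inE.
rewrite (card_imset _ ab_inj).
have -> : [set x | ~~ ab_central x && (ab_class x == q)]
          = setX [set i : 'I_(2 * n) | odd i == (q != ord0)]
                 (if q == ord0 then [set~ ord0] else [set inord q.-1]).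
  apply/setP => [[i j]]; rewrite !inE /ab_central -val_eqE /= val_ab_class.
  by case: (odd i); case: q => [[|[|[|[|m]]]] ?]; case: j => [[|[|[|m2]]] ?];
    rewrite // !inE -!val_eqE /= ?inordK.
rewrite cardsX card_ord_odd.
by case: ifP => _; rewrite ?cardsC1 ?cards1 ?card_ord ?muln1 // mulnC.
Qed.

Definition nc_vertex_class (i : 'I_#|nc_vertices G|) : 'I_4 :=
  commuting_class (nc_vert i).

Lemma class_card_nc_vertex_class q :
  class_card nc_vertex_class q = (if q == ord0 then 2 * n else n)%N.
Proof.
rewrite /class_card /nc_vertex_class /nc_vert.
by rewrite (card_enum_val_pred _ (fun g => commuting_class g == q)) card_commuting_class.
Qed.

Lemma card_nc_vertices_U6n : #|nc_vertices G| = (5 * n)%N.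
Proof.
rewrite -(sum_class_card nc_vertex_class) big_ord_recl class_card_nc_vertex_class /=.
rewrite (eq_bigr (fun _ => n)) => [|q _]; last first.
  by rewrite class_card_nc_vertex_class eq_sym (negPf (neq_lift _ _)).
by rewrite sum_nat_const card_ord -mulnDl.
Qed.

Lemma nc_distlap_U6n :
  nc_distlap G = dist_laplacian (multipartite_distmx nc_vertex_class algC).
Proof.
rewrite /nc_distlap /nc_transmx.
suff -> : nc_distmx G = multipartite_distmx nc_vertex_class algC by [].
apply/matrixP => i j.
rewrite !mxE (nc_dist_classes commute_commuting_class) ?enum_valP //.
by rewrite /nc_vert (inj_eq enum_val_inj).
Qed.

End U6n.

Theorem theorem5p2 (gT : finGroupType) (G : {group gT}) (a b : gT) (n : nat) :
  (0 < n)%N ->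
  G :=: <<[set a; b]>>%g ->
  (a ^+ (2 * n))%g = 1%g ->
  (b ^+ 3)%g = 1%g ->
  (b ^ a)%g = (b^-1)%g ->
  #|G| = (6 * n)%N ->
  char_poly (nc_distlap G)
  = ('X * ('X - (5 * n)%:R%:P) ^+ 3 * ('X - (6 * n)%:R%:P) ^+ (3 * (n - 1))
       * ('X - (7 * n)%:R%:P) ^+ (2 * n - 1))%R.
Proof.
move=> _ defG a_order b_order conj_b_a card_G.
have class_size := class_card_nc_vertex_class defG a_order b_order conj_b_a card_G.
rewrite (nc_distlap_U6n defG a_order b_order conj_b_a card_G).
rewrite char_poly_multipartite_distlap //; last first.
  by move=> q; rewrite class_size; case: ifP; rewrite ?muln_gt0 (U6n_n_gt0 card_G).
rewrite big_ord_recl class_size /=.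
rewrite (eq_bigr (fun _ => ('X - (#|nc_vertices G| + n)%:R%:P) ^+ n.-1)) => [|q _];
  last first.
  by rewrite class_size eq_sym (negPf (neq_lift _ _)).
rewrite prodr_const card_ord (card_nc_vertices_U6n defG a_order b_order conj_b_a card_G).
have -> : (5 * n + 2 * n = 7 * n)%N by rewrite -mulnDl.
have -> : (5 * n + n = 6 * n)%N by rewrite mulSn addnC.
by rewrite -!subn1 [(3 * _)%N]mulnC exprM (mulrC (_ ^+ (2 * n - 1))) !mulrA.
Qed.
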